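(* Under the model described in the context, for all $s\ge0$, \[ \int_0^\infty\!\!\int_0^\infty \left(1-e^{-sPhG(t)}\right) q(h)\,p(t)\,dh\,dt<\infty . \]
   Context: Let $\lambda>0$, $\alpha>2$. Transmitter locations form a Poisson point process on $\mathbb R^2$ with locally finite mean measure $\Lambda$ and $\Lambda(\mathbb R^2)=\infty$. A test receiver is at a fixed point $\mathbf X_o$, $T(\mathbf x)=\|\mathbf x-\mathbf X_o\|_2$, and $\Lambda(\{\mathbf x: T(\mathbf x)\in A\})=\lambda\int_A p(t)\,dt$ for all Borel $A\subseteq[0,\infty)$, where $p\ge0$ satisfies $p(t)=O(t^{\alpha-1-\epsilon})$ as $t\to\infty$ for some $\epsilon>0$. The path-loss function $G:[0,\infty)\to[0,\infty)$ is bounded, monotone non-increasing, with $G(t)=O(t^{-\alpha})$ as $t\to\infty$. $q$ is a probability density on $[0,\infty)$ with finite first, second and third moments. $P>0$. *)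

From HB Require Import structures.
From mathcomp Require Import all_boot all_order all_algebra.
From mathcomp Require Import all_classical all_reals all_analysis.
Set Implicit Arguments. Unset Strict Implicit. Unset Printing Implicit Defensive.
Import Order.TTheory GRing.Theory Num.Theory.
Local Open Scope ring_scope.
Local Open Scope classical_set_scope.

Definition dist2 {R : realType} (Xo x : R * R) : R :=
  Num.sqrt ((x.1 - Xo.1) ^+ 2 + (x.2 - Xo.2) ^+ 2).

Definition bigO_pow_at_infty {R : realType} (f : R -> R) (beta : R) : Prop :=
  exists C M : R, 0 < M /\ forall t : R, M <= t -> `|f t| <= C * t `^ beta.

From HB Require Import structures.
From mathcomp Require Import all_boot all_order all_algebra.
From mathcomp Require Import all_classical all_reals all_analysis.
From mathcomp Require Import measurable_realfun.
From mathcomp Require Import ring lra.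
Set Implicit Arguments. Unset Strict Implicit. Unset Printing Implicit Defensive.
Import Order.TTheory GRing.Theory Num.Theory.
Local Open Scope ring_scope.
Local Open Scope classical_set_scope.

(* Since 1 - exp (- x) <= x, the inner integral is at most
   s P G(t) p(t) E[h], so it suffices that G p is integrable on [0, +oo[.
   On [0, M[ the function G is bounded and lambda * int_0^M p is the
   Lambda-mass of a ball, finite by local finiteness; on [M, +oo[ the
   growth conditions give G(t) p(t) = O(t^(-1 - eps)). *)

Lemma measurable_dist2 (R : realType) (Xo : R * R) :
  measurable_fun setT (dist2 Xo).
Proof.
apply: measurableT_comp; first exact: continuous_measurable_fun (@sqrt_continuous R).
by apply: measurable_funD; apply: measurable_funX; apply: measurable_funB.
Qed.

Lemma one_sub_expRN_ge0 (R : realType) (x : R) : 0 <= x -> 0 <= 1 - expR (- x).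
Proof. by move=> x0; rewrite subr_ge0 -expR0 ler_expR oppr_le0. Qed.

Lemma one_sub_expRN_le (R : realType) (x : R) : 1 - expR (- x) <= x.
Proof. by have := expR_ge1Dx (- x); lra. Qed.

Lemma nonincreasing_measurable_ge0 (R : realType) (f : R -> R) :
  (forall x y, 0 <= x -> x <= y -> f y <= f x) ->
  measurable_fun [set t : R | 0 <= t] f.
Proof.
move=> f_ni; pose g t := f (Num.max t 0); apply: (eq_measurable_fun g).
  by move=> t; rewrite inE /g => t0; rewrite max_l.
apply: nonincreasing_measurable => [|x y xy].
  by rewrite -set_itvcy; exact: measurable_itv.
apply: f_ni; first by rewrite le_max lexx orbT.
by rewrite ge_max !le_max xy lexx !orbT.
Qed.

Lemma cvgy_powRN (R : realType) (e : R) : 0 < e -> x `^ (- e) @[x --> +oo] --> 0.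
Proof.
move=> e0.
have eln : (fun x : R => e * ln x) @ +oo --> +oo.
  apply/cvgryPge => A; near=> x.
  have x0 : 0 < x by near: x; apply: nbhs_pinfty_gt.
  rewrite -ler_pdivrMl// -[X in X <= _]expRK ler_ln; last 2 first.
  - by rewrite posrE expR_gt0.
  - by rewrite posrE.
  by near: x; apply: nbhs_pinfty_ge; exact: num_real.
apply: (@cvg_trans _ ((expR (- (e * ln x))) @[x --> +oo])); last first.
  exact: cvg_comp eln (@cvgr_expR R).
apply: near_eq_cvg; near=> x.
have x0 : 0 < x by near: x; apply: nbhs_pinfty_gt.
by rewrite /powR gt_eqF// mulNr.
Unshelve. all: by end_near. Qed.

Local Open Scope ereal_scope.

Lemma integral_powR_itvcy (R : realType) (a e : R) : (0 < a)%R -> (0 < e)%R ->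
  \int[@lebesgue_measure R]_(x in `[a, +oo[) (x `^ (-1 - e))%:E
    = (a `^ (- e) / e)%:E.
Proof.
move=> a0 e0.
pose F (x : R) := (- e^-1 * x `^ (- e))%R.
have dF (x : R) : (0 < x)%R -> is_derive x 1%R F (x `^ (-1 - e))%R.
  move=> x0; have -> : (x `^ (-1 - e) = - e^-1 *: (- e * x `^ (- e - 1)))%R.
    by rewrite /GRing.scale/= mulrA mulrNN mulVf ?gt_eqF// mul1r addrC.
  exact/is_deriveZ/is_derive1_powR.
have -> : (a `^ (- e) / e = 0 - F a)%R by rewrite /F sub0r mulNr opprK mulrC.
apply: ge0_continuous_FTC2y.
- by move=> x _; exact: powR_ge0.
- apply: derivable_within_continuous => x; rewrite in_itv/= andbT => ax.
  by apply: derivable_powR; rewrite in_itv/= andbT (lt_le_trans a0 ax).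
- by rewrite -[0%R](mulr0 (- e^-1)%R); apply: cvgMl_tmp; exact: cvgy_powRN.
- by move=> x ax; have [] := dF x (lt_trans a0 ax).
- have [da _] := dF a a0.
  have [/(_ da)/differentiable_continuous cF _] := derivable1_diffP F a.
  exact: cvg_at_right_filter cF.
- move=> x; rewrite in_itv/= andbT => ax.
  by rewrite derive1E; have [_ ->] := dF x (lt_trans a0 ax).
Qed.

Lemma ge0_le_integral_nonmeasurable d (T : measurableType d) (R : realType)
  (mu : {measure set T -> \bar R}) (D : set T) (f1 f2 : T -> \bar R) :
  (forall x, D x -> 0 <= f1 x) -> (forall x, D x -> f1 x <= f2 x) ->
  \int[mu]_(x in D) f1 x <= \int[mu]_(x in D) f2 x.
Proof.
move=> f10 f12.
have f20 x : D x -> 0 <= f2 x by move=> Dx; exact: le_trans (f10 x Dx) (f12 x Dx).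
rewrite (ge0_integralE _ f10) (ge0_integralE _ f20).
apply: ereal_sup_le => _ [h /= hf <-]; exists h => //= x.
apply: (le_trans (hf x)); rewrite /patch; case: ifP => // /set_mem Dx.
exact: f12.
Qed.

Lemma ge0_integral_itvcy_split_lty (R : realType) (f : R -> R) (a M : R) :
  (a <= M)%R -> measurable_fun `[a, +oo[ f -> (forall t, a <= t -> 0 <= f t)%R ->
  \int[@lebesgue_measure R]_(t in `[a, M[) (f t)%:E < +oo ->
  \int[@lebesgue_measure R]_(t in `[M, +oo[) (f t)%:E < +oo ->
  \int[@lebesgue_measure R]_(t in `[a, +oo[) (f t)%:E < +oo.
Proof.
move=> aM mf f0 head_lty tail_lty.
have itv_split : `[a, +oo[%classic = `[a, M[ `|` `[M, +oo[.
  by apply: itv_bndbnd_setU; rewrite bnd_simp.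
have mfU : measurable_fun (`[a, M[ `|` `[M, +oo[) (EFin \o f).
  by rewrite -itv_split; exact/measurable_EFinP.
rewrite itv_split ge0_integral_setU //=; first exact: lte_add_pinfty.
- move=> t; rewrite !in_itv/= !andbT lee_fin => -[/andP[ta _]|Mt]; apply: f0 => //.
  exact: le_trans aM Mt.
- apply/disj_setPS => t [] /=; rewrite !in_itv/= andbT => /andP[_ tM] Mt.
  by move: (lt_le_trans tM Mt); rewrite ltxx.
Qed.

Lemma integral_bounded_mul_lty d (T : measurableType d) (R : realType)
  (mu : {measure set T -> \bar R}) (A : set T) (f g : T -> R) (B : R) :
  (0 <= B)%R -> measurable A -> measurable_fun A f ->
  (forall x, A x -> 0 <= f x)%R -> (forall x, A x -> 0 <= g x <= B)%R ->
  \int[mu]_(x in A) (f x)%:E < +oo -> \int[mu]_(x in A) (g x * f x)%:E < +oo.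
Proof.
move=> B0 mA mf f0 gB f_lty.
apply: (@le_lt_trans _ _ (\int[mu]_(x in A) (B%:E * (f x)%:E))).
  apply: ge0_le_integral_nonmeasurable => x Ax /=; have /andP[g0 gle] := gB x Ax.
    by rewrite lee_fin mulr_ge0// f0.
  by rewrite -EFinM lee_fin ler_wpM2r// f0.
rewrite ge0_integralZl_EFin//; first exact: lte_mul_pinfty.
exact/measurable_EFinP.
Qed.

Lemma bigO_pow_at_inftyM (R : realType) (f g : R -> R) (a b : R) :
  bigO_pow_at_infty f a -> bigO_pow_at_infty g b ->
  bigO_pow_at_infty (f \* g)%R (a + b).
Proof.
move=> [Cf [Mf [Mf0 fO]]] [Cg [Mg [Mg0 gO]]].
exists (Cf * Cg)%R, (Num.max Mf Mg); split => [|t]; first by rewrite lt_max Mf0.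
rewrite ge_max => /andP[Mft Mgt]; have t0 := lt_le_trans Mf0 Mft.
rewrite /= normrM powRD ?(gt_eqF t0) ?implybT// mulrACA.
by apply: ler_pM; rewrite ?normr_ge0 ?fO ?gO.
Qed.

Lemma bigO_powRN1_tail_integral_lty (R : realType) (f : R -> R) (e : R) :
  (0 < e)%R -> (forall t, 0 <= t -> 0 <= f t)%R -> bigO_pow_at_infty f (-1 - e) ->
  exists M : R, (0 < M)%R /\
    \int[@lebesgue_measure R]_(t in `[M, +oo[) (f t)%:E < +oo.
Proof.
move=> e0 f0 [C [M [M0 fO]]]; exists M; split => //.
have C0 : (0 <= C)%R.
  by have := le_trans (normr_ge0 _) (fO M (lexx M)); rewrite pmulr_lge0// powR_gt0.
apply: (@le_lt_trans _ _
  (\int[@lebesgue_measure R]_(t in `[M, +oo[) (C%:E * (t `^ (-1 - e))%:E))).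
  apply: ge0_le_integral_nonmeasurable => t; rewrite /= in_itv/= andbT => Mt.
    by rewrite lee_fin f0// (le_trans (ltW M0)).
  by rewrite -EFinM lee_fin (le_trans (ler_norm _))// fO.
rewrite ge0_integralZl_EFin//.
- by rewrite integral_powR_itvcy// -EFinM ltry.
- by move=> t _; rewrite lee_fin powR_ge0.
- by apply/measurable_EFinP; apply: measurable_funS (measurable_powR _).
Qed.

Lemma integral_one_sub_expRN_le (R : realType) (q : R -> R) (a c m : R) :
  (0 <= a)%R -> (0 <= c)%R ->
  measurable_fun [set h : R | 0 <= h]%R q -> (forall h, 0 <= h -> 0 <= q h)%R ->
  \int[@lebesgue_measure R]_(h in [set h : R | 0 <= h]%R) (h * q h)%:E = m%:E ->
  \int[@lebesgue_measure R]_(h in [set h : R | 0 <= h]%R)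
      ((1 - expR (- (a * h))) * q h * c)%:E
    <= (a * c * m)%:E.
Proof.
move=> a0 c0 mq q0 mE.
have mD : measurable [set h : R | 0 <= h]%R.
  by rewrite -set_itvcy; exact: measurable_itv.
rewrite EFinM -mE -ge0_integralZl_EFin ?mulr_ge0//; last 2 first.
- by move=> h h0 /=; rewrite lee_fin mulr_ge0// q0.
- by apply/measurable_EFinP/measurable_funM => //; exact: measurable_id.
apply: ge0_le_integral_nonmeasurable => h /= h0.
  by rewrite lee_fin !mulr_ge0 ?one_sub_expRN_ge0 ?mulr_ge0 ?q0.
rewrite -EFinM lee_fin (_ : a * c * (h * q h) = a * h * q h * c)%R; last by ring.
by rewrite ler_wpM2r// ler_wpM2r ?q0// one_sub_expRN_le.
Qed.

Lemma distance_density_integral_lty (R : realType) (lambda : R)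
  (Lambda : {measure set (R * R)%type -> \bar R}) (Xo : R * R) (p : R -> R) :
  (0 < lambda)%R ->
  (forall A : set (R * R), measurable A ->
     (exists r : R, forall x, A x -> dist2 Xo x <= r)%R -> Lambda A < +oo) ->
  (forall A : set R, measurable A -> A `<=` [set t | 0 <= t]%R ->
     Lambda (dist2 Xo @^-1` A) =
       lambda%:E * \int[@lebesgue_measure R]_(t in A) (p t)%:E) ->
  forall M : R, \int[@lebesgue_measure R]_(t in `[0%R, M[) (p t)%:E < +oo.
Proof.
move=> lambda0 loc_fin Lp M.
have mball : measurable (dist2 Xo @^-1` `[0%R, M[).
  by rewrite -[_ @^-1` _]setTI; exact: measurable_dist2.
have bounded : (exists r, forall x, (dist2 Xo @^-1` `[0%R, M[) x -> dist2 Xo x <= r)%R.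
  by exists M => x; rewrite /= in_itv/= => /andP[_ /ltW].
have := loc_fin _ mball bounded; rewrite Lp//; last first.
  by move=> t; rewrite /= in_itv/= => /andP[].
rewrite !ltey; apply: contra => /eqP ->.
by rewrite mulry gtr0_sg// mul1e.
Qed.

Local Close Scope ereal_scope.

Lemma integral_itvcy0_lty (R : realType) (f : R -> R) (e : R) : 0 < e ->
  measurable_fun `[0 : R, +oo[ f -> (forall t, 0 <= t -> 0 <= f t) ->
  (forall M : R, \int[@lebesgue_measure R]_(t in `[0%R, M[) (f t)%:E < +oo)%E ->
  bigO_pow_at_infty f (-1 - e) ->
  (\int[@lebesgue_measure R]_(t in `[0%R : R, +oo[) (f t)%:E < +oo)%E.
Proof.
move=> e0 mf f0 head_lty fO.
have [M [M0 tail_lty]] := bigO_powRN1_tail_integral_lty e0 f0 fO.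
exact: ge0_integral_itvcy_split_lty (ltW M0) mf f0 (head_lty M) tail_lty.
Qed.

Lemma integral_mul_density_lty (R : realType) (lambda alpha eps : R)
  (Lambda : {measure set (R * R)%type -> \bar R}) (Xo : R * R) (p G : R -> R) :
  0 < lambda ->
  (forall A : set (R * R), measurable A ->
     (exists r : R, forall x, A x -> dist2 Xo x <= r) -> (Lambda A < +oo)%E) ->
  (forall A : set R, measurable A -> A `<=` [set t | 0 <= t] ->
     Lambda (dist2 Xo @^-1` A) =
       (lambda%:E * \int[@lebesgue_measure R]_(t in A) (p t)%:E)%E) ->
  measurable_fun [set t : R | 0 <= t] p -> (forall t, 0 <= t -> 0 <= p t) ->
  0 < eps -> bigO_pow_at_infty p (alpha - 1 - eps) ->
  (forall t, 0 <= t -> 0 <= G t) -> (exists B : R, forall t, 0 <= t -> G t <= B) ->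
  (forall x y, 0 <= x -> x <= y -> G y <= G x) -> bigO_pow_at_infty G (- alpha) ->
  (\int[@lebesgue_measure R]_(t in [set t : R | (0 <= t)%R]) (G t * p t)%:E < +oo)%E.
Proof.
move=> lambda0 loc_fin Lp mp p0 eps0 pO G0 [B GB] G_ni GO.
have D_itv : [set t : R | 0 <= t] = `[0, +oo[ by rewrite set_itvcy.
have mD : measurable [set t : R | 0 <= t] by rewrite D_itv; exact: measurable_itv.
rewrite D_itv; apply: (integral_itvcy0_lty eps0).
- rewrite -D_itv; exact: measurable_funM (nonincreasing_measurable_ge0 G_ni) mp.
- by move=> t t0; rewrite mulr_ge0 ?G0 ?p0.
- move=> M; have B0 : 0 <= B by rewrite (le_trans (G0 _ (lexx 0))) ?GB.
  apply: integral_bounded_mul_lty B0 _ _ _ _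
    (distance_density_integral_lty lambda0 loc_fin Lp M).
  + exact: measurable_itv.
  + by apply: measurable_funS mp => // t; rewrite /= in_itv/= => /andP[].
  + by move=> t; rewrite /= in_itv/= => /andP[t0 _]; exact: p0.
  + by move=> t; rewrite /= in_itv/= => /andP[t0 _]; rewrite G0 ?GB.
- have -> : -1 - eps = - alpha + (alpha - 1 - eps) by ring.
  exact: bigO_pow_at_inftyM.
Qed.

Lemma integral_one_sub_expR_lty (R : realType) (s P m : R) (p G q : R -> R) :
  0 <= s -> 0 <= P ->
  measurable_fun [set h : R | 0 <= h] q -> (forall h, 0 <= h -> 0 <= q h) ->
  (\int[@lebesgue_measure R]_(h in [set h : R | (0 <= h)%R]) (h * q h)%:E = m%:E)%E ->
  (forall t, 0 <= t -> 0 <= G t) -> (forall t, 0 <= t -> 0 <= p t) ->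
  measurable_fun [set t : R | 0 <= t] (G \* p) ->
  (\int[@lebesgue_measure R]_(t in [set t : R | (0 <= t)%R]) (G t * p t)%:E < +oo)%E ->
  (\int[@lebesgue_measure R]_(t in [set t : R | (0 <= t)%R])
     \int[@lebesgue_measure R]_(h in [set h : R | (0 <= h)%R])
        (((1 - expR (- (s * P * h * G t))) * q h * p t)%R)%:E < +oo)%E.
Proof.
move=> s0 P0 mq q0 mE G0 p0 mGp Gp_lty.
have mD : measurable [set t : R | 0 <= t] by rewrite -set_itvcy; exact: measurable_itv.
have sPm0 : 0 <= s * P * m.
  rewrite !mulr_ge0// -lee_fin -mE integral_ge0// => h h0.
  by rewrite lee_fin mulr_ge0 ?q0.
apply: (@le_lt_trans _ _ (\int[@lebesgue_measure R]_(t in [set t : R | (0 <= t)%R])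
  ((s * P * m)%:E * (G t * p t)%:E))%E).
  apply: ge0_le_integral_nonmeasurable => t t0 /=.
    apply: integral_ge0 => h h0; rewrite lee_fin !mulr_ge0 ?q0 ?p0//.
    by rewrite one_sub_expRN_ge0// !mulr_ge0 ?G0.
  rewrite -EFinM (_ : s * P * m * (G t * p t) = s * P * G t * p t * m); last by ring.
  under eq_integral do rewrite [s * P * _ * G t]mulrAC.
  by apply: integral_one_sub_expRN_le; rewrite ?mulr_ge0 ?G0 ?p0.
rewrite ge0_integralZl_EFin//; first by rewrite lte_mul_pinfty.
- by move=> t t0; rewrite lee_fin mulr_ge0 ?G0 ?p0.
- exact/measurable_EFinP.
Qed.

Theorem lemma1 (R : realType) (lambda alpha eps P : R)
  (Lambda : {measure set (R * R)%type -> \bar R}) (Xo : R * R)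
  (p G q : R -> R) :
  0 < lambda -> 2 < alpha -> 0 < P ->
  (* Lambda: locally finite (finite on bounded measurable sets), infinite total mass *)
  (forall A : set (R * R), measurable A ->
     (exists r : R, forall x, A x -> dist2 Xo x <= r) -> (Lambda A < +oo)%E) ->
  Lambda setT = +oo%E ->
  (* p >= 0 and the distance distribution of Lambda is lambda p(t) dt *)
  measurable_fun [set t : R | (0 <= t)%R] p ->
  (forall t, 0 <= t -> 0 <= p t) ->
  (forall A : set R, measurable A -> A `<=` [set t | 0 <= t] ->
     Lambda (dist2 Xo @^-1` A) =
       (lambda%:E * \int[@lebesgue_measure R]_(t in A) (p t)%:E)%E) ->
  0 < eps -> bigO_pow_at_infty p (alpha - 1 - eps) ->
  (* G : [0,oo) -> [0,oo) bounded, non-increasing, O(t^-alpha) *)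
  (forall t, 0 <= t -> 0 <= G t) ->
  (exists B : R, forall t, 0 <= t -> G t <= B) ->
  (forall x y, 0 <= x -> x <= y -> G y <= G x) ->
  bigO_pow_at_infty G (- alpha) ->
  (* q probability density on [0,oo) with finite first three moments *)
  measurable_fun [set h : R | (0 <= h)%R] q ->
  (forall h, 0 <= h -> 0 <= q h) ->
  (\int[@lebesgue_measure R]_(h in [set h : R | (0 <= h)%R]) (q h)%:E = 1)%E ->
  (forall k : nat, (1 <= k <= 3)%N ->
     (\int[@lebesgue_measure R]_(h in [set h : R | (0 <= h)%R]) ((h ^+ k * q h)%R)%:E
        < +oo)%E) ->
  forall s : R, 0 <= s ->
  (\int[@lebesgue_measure R]_(t in [set t : R | (0 <= t)%R])
     \int[@lebesgue_measure R]_(h in [set h : R | (0 <= h)%R])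
        (((1 - expR (- (s * P * h * G t))) * q h * p t)%R)%:E < +oo)%E.
Proof.
move=> lambda0 _ P0 loc_fin _ mp p0 Lp eps0 pO G0 GB G_ni GO mq q0 _ q_mom s s0.
have [m mE] : exists m : R,
    (\int[@lebesgue_measure R]_(h in [set h : R | (0 <= h)%R]) (h * q h)%:E = m%:E)%E.
  have := q_mom 1%N isT; under eq_integral do rewrite expr1.
  set m1 := (\int[_]_(_ in _) _)%E => m1_lty.
  have m1_ge0 : (0 <= m1)%E by apply: integral_ge0 => h h0; rewrite lee_fin mulr_ge0 ?q0.
  by exists (fine m1); rewrite fineK// ge0_fin_numE.
have mGp := measurable_funM (nonincreasing_measurable_ge0 G_ni) mp.
have Gp_lty := integral_mul_density_lty lambda0 loc_fin Lp mp p0 eps0 pO G0 GB G_ni GO.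
exact: integral_one_sub_expR_lty s0 (ltW P0) mq q0 mE G0 p0 mGp Gp_lty.
Qed.
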